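(* Let $h>0$, $P>0$, $0<\zeta\le1$, $\sigma_A^2>0$, $\sigma_{\rm cov}^2>0$, $P_S>0$, and $Q\in[0,\zeta hP)$. Define $$a=\sigma_{\rm cov}^2-\frac{\sigma_A^2P_S}{\zeta hP},\quad b=\sigma_A^2\Big(1-\frac{Q}{\zeta hP}\Big),\quad c=-\frac{P_S}{\zeta},\quad d=hP\Big(1-\frac{Q}{\zeta hP}\Big),$$ and $$R(s)=s\log_2\!\Big(1+\frac{cs+d}{as+b}\Big).$$ Then $R$ is (well defined and) concave on the interval $s\in\Big[\frac{d}{hP-c},\ \min\{-\frac dc,1\}\Big]$.
   Context: $R(s)$ is the rate achieved on the boundary of the OPS rate-energy region of a separated receiver with circuit power $P_S$ when the harvested net energy equals $Q$, as a function of $s=1-\alpha$, the fraction of time the information decoder is on; $\sigma_A^2$ is antenna noise power, $\sigma_{\rm cov}^2$ conversion noise power, $\zeta$ harvesting efficiency, $hP$ the received power. *)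

From Stdlib Require Import Reals Lra.
Open Scope R_scope.

Definition log2 (x : R) : R := ln x / ln 2.

Definition coef_a (h P zeta sA2 scov2 PS : R) : R := scov2 - sA2 * PS / (zeta * h * P).
Definition coef_b (h P zeta sA2 Q : R) : R := sA2 * (1 - Q / (zeta * h * P)).
Definition coef_c (zeta PS : R) : R := - PS / zeta.
Definition coef_d (h P zeta Q : R) : R := h * P * (1 - Q / (zeta * h * P)).

Definition rate (a b c d s : R) : R := s * log2 (1 + (c * s + d) / (a * s + b)).

Definition concave_on (f : R -> R) (lo hi : R) : Prop :=
  forall x y t, lo <= x <= hi -> lo <= y <= hi -> 0 <= t <= 1 ->
    t * f x + (1 - t) * f y <= f (t * x + (1 - t) * y).

From Stdlib Require Import Reals Lra.
From Coquelicot Require Import Coquelicot.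
Open Scope R_scope.

(* Writing 1 + (c s + d)/(a s + b) = ((a+c) s + (b+d))/(a s + b), the rate is
   (1 / ln 2) * s (ln(al s + be) - ln(a s + b)) with al = a + c, be = b + d.
   For such a function the second derivative equals
   (b^2 u^2 - be^2 v^2) / (s u^2 v^2), where u = al s + be and v = a s + b,
   and b u - be v = s (b al - be a); so it is nonpositive as soon as
   b c <= d a, which gives concavity (via the mean value theorem). *)

Lemma convex_combination_in (lo hi x y t : R) :
  lo <= x <= hi -> lo <= y <= hi -> 0 <= t <= 1 ->
  lo <= t * x + (1 - t) * y <= hi.
Proof. intros; split; nra. Qed.

Lemma concave_on_of_tangents (F F1 : R -> R) (lo hi : R) :
  (forall x y, lo <= x <= hi -> lo <= y <= hi -> F y <= F x + F1 x * (y - x)) ->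
  concave_on F lo hi.
Proof.
  intros tangent x y t Hx Hy Ht.
  pose proof (convex_combination_in lo hi x y t Hx Hy Ht) as Hz.
  set (z := t * x + (1 - t) * y) in *.
  assert (Tx : t * F x <= t * (F z + F1 z * (x - z)))
    by (apply Rmult_le_compat_l; [lra | exact (tangent z x Hz Hx)]).
  assert (Ty : (1 - t) * F y <= (1 - t) * (F z + F1 z * (y - z)))
    by (apply Rmult_le_compat_l; [lra | exact (tangent z y Hz Hy)]).
  assert (E : t * (F z + F1 z * (x - z)) + (1 - t) * (F z + F1 z * (y - z)) = F z)
    by (unfold z; ring).
  lra.
Qed.

Lemma antitone_of_nonpos_derivative (G G1 : R -> R) (lo hi : R) :
  (forall s, lo <= s <= hi -> derivable_pt_lim G s (G1 s)) ->
  (forall s, lo <= s <= hi -> G1 s <= 0) ->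
  forall x y, lo <= x -> x <= y -> y <= hi -> G y <= G x.
Proof.
  intros HG HG1 x y Hx Hxy Hy.
  destruct (Rle_lt_or_eq_dec x y Hxy) as [Hlt | ->]; [| lra].
  destruct (MVT_cor2 G G1 x y Hlt) as [c [Hdiff Hc]].
  { intros; apply HG; lra. }
  assert (G1 c <= 0) by (apply HG1; lra).
  nra.
Qed.

Lemma tangent_of_antitone_derivative (F F1 : R -> R) (lo hi : R) :
  (forall s, lo <= s <= hi -> derivable_pt_lim F s (F1 s)) ->
  (forall x y, lo <= x -> x <= y -> y <= hi -> F1 y <= F1 x) ->
  forall x y, lo <= x <= hi -> lo <= y <= hi -> F y <= F x + F1 x * (y - x).
Proof.
  intros HF antitone x y Hx Hy.
  destruct (total_order_T x y) as [[Hlt | ->] | Hgt].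
  - destruct (MVT_cor2 F F1 x y Hlt) as [c [Hdiff Hc]].
    { intros; apply HF; lra. }
    assert (F1 c <= F1 x) by (apply antitone; lra).
    nra.
  - lra.
  - destruct (MVT_cor2 F F1 y x Hgt) as [c [Hdiff Hc]].
    { intros; apply HF; lra. }
    assert (F1 x <= F1 c) by (apply antitone; lra).
    nra.
Qed.

Lemma concave_on_of_second_derivative (F F1 F2 : R -> R) (lo hi : R) :
  (forall s, lo <= s <= hi -> derivable_pt_lim F s (F1 s)) ->
  (forall s, lo <= s <= hi -> derivable_pt_lim F1 s (F2 s)) ->
  (forall s, lo <= s <= hi -> F2 s <= 0) ->
  concave_on F lo hi.
Proof.
  intros HF HF1 HF2.
  apply concave_on_of_tangents with F1.
  apply tangent_of_antitone_derivative; [exact HF |].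
  exact (antitone_of_nonpos_derivative F1 F2 lo hi HF1 HF2).
Qed.

Lemma concave_on_scale_ext (f g : R -> R) (k lo hi : R) :
  0 <= k -> (forall s, lo <= s <= hi -> g s = k * f s) ->
  concave_on f lo hi -> concave_on g lo hi.
Proof.
  intros Hk Hg Hf x y t Hx Hy Ht.
  rewrite (Hg x Hx), (Hg y Hy), (Hg _ (convex_combination_in lo hi x y t Hx Hy Ht)).
  pose proof (Rmult_le_compat_l k _ _ Hk (Hf x y t Hx Hy Ht)).
  nra.
Qed.

(* Sign of the second derivative of s (ln(al s + be) - ln(a s + b)):
   with u = al s + be and v = a s + b it equals (b^2 u^2 - be^2 v^2)/(s u^2 v^2),
   and b u - be v = s (b al - be a) <= 0. *)
Lemma s_log_ratio_second_derivative_nonpos (al be a b s : R) :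
  0 < b -> b * al <= be * a -> 0 < s -> 0 < al * s + be -> 0 < a * s + b ->
  2 * (al / (al * s + be) - a / (a * s + b))
    + s * (- (al * al) / ((al * s + be) * (al * s + be))
           + a * a / ((a * s + b) * (a * s + b))) <= 0.
Proof.
  intros Hb Hcond Hs Hu Hv.
  set (u := al * s + be) in *. set (v := a * s + b) in *.
  assert (E : 2 * (al / u - a / v) + s * (- (al * al) / (u * u) + a * a / (v * v))
            = (b * b * (u * u) - be * be * (v * v)) / (s * (u * u) * (v * v)))
    by (unfold u, v in *; field; repeat split; lra).
  rewrite E.
  assert (Hbu : b * u <= be * v) by (unfold u, v; nra).
  assert (b * u > 0) by nra.
  assert (Hnum : b * b * (u * u) - be * be * (v * v) <= 0) by nra.
  assert (Hden : 0 < s * (u * u) * (v * v)) by (repeat apply Rmult_lt_0_compat; lra).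
  unfold Rdiv.
  pose proof (Rinv_0_lt_compat _ Hden).
  nra.
Qed.

Lemma concave_s_log_ratio (al be a b lo hi : R) :
  0 < b -> b * al <= be * a ->
  (forall s, lo <= s <= hi -> 0 < s /\ 0 < al * s + be /\ 0 < a * s + b) ->
  concave_on (fun s => s * (ln (al * s + be) - ln (a * s + b))) lo hi.
Proof.
  intros Hb Hcond Hdom.
  apply concave_on_of_second_derivative with
    (F1 := fun s => ln (al * s + be) - ln (a * s + b)
                    + s * (al / (al * s + be) - a / (a * s + b)))
    (F2 := fun s => 2 * (al / (al * s + be) - a / (a * s + b))
                    + s * (- (al * al) / ((al * s + be) * (al * s + be))
                           + a * a / ((a * s + b) * (a * s + b)))).
  - intros s Hs; destruct (Hdom s Hs) as [Hs0 [Hu Hv]].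
    apply is_derive_Reals; auto_derive.
    + repeat split; lra.
    + field; lra.
  - intros s Hs; destruct (Hdom s Hs) as [Hs0 [Hu Hv]].
    apply is_derive_Reals; auto_derive.
    + repeat split; lra.
    + field; lra.
  - intros s Hs; destruct (Hdom s Hs) as [Hs0 [Hu Hv]].
    now apply s_log_ratio_second_derivative_nonpos.
Qed.

Lemma rate_well_defined (a b c d s : R) :
  0 < a * s + b -> 0 <= c * s + d ->
  a * s + b <> 0 /\ 0 < 1 + (c * s + d) / (a * s + b).
Proof.
  intros Hv Hw; split; [lra |].
  assert (0 <= (c * s + d) / (a * s + b)) by (apply Rdiv_le_0_compat; lra).
  lra.
Qed.

Lemma rate_as_log_ratio (a b c d s : R) :
  0 < a * s + b -> 0 <= c * s + d ->
  rate a b c d s = / ln 2 * (s * (ln ((a + c) * s + (b + d)) - ln (a * s + b))).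
Proof.
  intros Hv Hw.
  unfold rate, log2.
  replace (1 + (c * s + d) / (a * s + b))
    with (((a + c) * s + (b + d)) / (a * s + b)) by (field; lra).
  rewrite ln_div by lra.
  unfold Rdiv; ring.
Qed.

Theorem rate_concave (a b c d lo hi : R) :
  0 < b -> b * c <= d * a ->
  (forall s, lo <= s <= hi -> 0 < s /\ 0 < a * s + b /\ 0 <= c * s + d) ->
  concave_on (rate a b c d) lo hi.
Proof.
  intros Hb Hcond Hdom.
  assert (Hln2 : 0 < ln 2) by (rewrite <- ln_1; apply ln_increasing; lra).
  apply concave_on_scale_ext with
    (f := fun s => s * (ln ((a + c) * s + (b + d)) - ln (a * s + b)))
    (k := / ln 2).
  - left; now apply Rinv_0_lt_compat.
  - intros s Hs; destruct (Hdom s Hs) as [_ [Hv Hw]].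
    now apply rate_as_log_ratio.
  - apply concave_s_log_ratio; [exact Hb | nra |].
    intros s Hs; destruct (Hdom s Hs) as [Hs0 [Hv Hw]].
    repeat split; lra.
Qed.

(* The interval [d/(p - c), min(-d/c, 1)] lies in the domain of [rate_concave]
   when b, d, p > 0, c < 0 and b c < d a: positivity of a s + b follows from
   d (a s + b) = s (d a - b c) + b (c s + d). *)
Lemma rate_domain (a b c d p s : R) :
  0 < b -> 0 < d -> c < 0 -> 0 < p -> b * c < d * a ->
  d / (p - c) <= s <= Rmin (- d / c) 1 ->
  0 < s /\ 0 < a * s + b /\ 0 <= c * s + d.
Proof.
  intros Hb Hd Hc Hp Hcond [Hlo Hhi].
  assert (Hs : 0 < s).
  { apply Rlt_le_trans with (d / (p - c)); [apply Rdiv_lt_0_compat |]; lra. }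
  assert (Hw : 0 <= c * s + d).
  { assert (Hsd : s <= - d / c) by (eapply Rle_trans; [exact Hhi | apply Rmin_l]).
    apply Rmult_le_compat_l with (r := - c) in Hsd; [| lra].
    replace (- c * (- d / c)) with d in Hsd by (field; lra).
    lra. }
  assert (E : d * (a * s + b) = s * (d * a - b * c) + b * (c * s + d)) by ring.
  repeat split; nra.
Qed.

(* The paper's coefficients satisfy b > 0, d > 0, c < 0 and b c < d a;
   the last holds because d a - b c = d scov2. *)
Lemma paper_coefficients_signs (h P zeta sA2 scov2 PS Q : R) :
  0 < h -> 0 < P -> 0 < zeta -> 0 < sA2 -> 0 < scov2 -> 0 < PS ->
  0 <= Q < zeta * h * P ->
  let a := coef_a h P zeta sA2 scov2 PS in
  let b := coef_b h P zeta sA2 Q in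
  let c := coef_c zeta PS in
  let d := coef_d h P zeta Q in
  0 < b /\ 0 < d /\ c < 0 /\ b * c < d * a.
Proof.
  intros hh hP hz hA hcov hPS hQ a b c d.
  assert (HK : 0 < zeta * h * P) by (repeat apply Rmult_lt_0_compat; lra).
  assert (Hr : 0 < 1 - Q / (zeta * h * P)).
  { assert (Q / (zeta * h * P) < 1); [| lra].
    apply Rmult_lt_reg_r with (zeta * h * P); [exact HK |].
    unfold Rdiv; rewrite Rmult_assoc, Rinv_l; lra. }
  assert (Hb : 0 < b) by (unfold b, coef_b; nra).
  assert (Hd : 0 < d) by (unfold d, coef_d; nra).
  assert (Hc : c < 0).
  { unfold c, coef_c, Rdiv.
    pose proof (Rinv_0_lt_compat _ hz). nra. }
  assert (E : d * a - b * c = d * scov2)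
    by (unfold a, b, c, d, coef_a, coef_b, coef_c, coef_d; field; lra).
  repeat split; try assumption; nra.
Qed.

Theorem lemma1 (h P zeta sA2 scov2 PS Q : R)
  (hh : 0 < h) (hP : 0 < P) (hz : 0 < zeta <= 1) (hA : 0 < sA2)
  (hcov : 0 < scov2) (hPS : 0 < PS) (hQ : 0 <= Q < zeta * h * P) :
  let a := coef_a h P zeta sA2 scov2 PS in
  let b := coef_b h P zeta sA2 Q in
  let c := coef_c zeta PS in
  let d := coef_d h P zeta Q in
  let lo := d / (h * P - c) in
  let hi := Rmin (- d / c) 1 in
  (* well-definedness: denominator nonzero and log argument positive *)
  (forall s, lo <= s <= hi ->
     a * s + b <> 0 /\ 0 < 1 + (c * s + d) / (a * s + b)) /\
  concave_on (rate a b c d) lo hi.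
Proof.
  intros a b c d lo hi.
  destruct (paper_coefficients_signs h P zeta sA2 scov2 PS Q)
    as [Hb [Hd [Hc Hcond]]]; try lra.
  assert (Hdom : forall s, lo <= s <= hi -> 0 < s /\ 0 < a * s + b /\ 0 <= c * s + d).
  { intros s Hs; apply (rate_domain a b c d (h * P)); try assumption.
    apply Rmult_lt_0_compat; assumption. }
  split.
  - intros s Hs; destruct (Hdom s Hs) as [_ [Hv Hw]].
    now apply rate_well_defined.
  - exact (rate_concave a b c d lo hi Hb (Rlt_le _ _ Hcond) Hdom).
Qed.
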